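(* Let $(X,d,\mu)$ be geometrically doubling and upper doubling with dominating function $\lambda$ and constant $C_\lambda$, and fix $\varrho>1$ and constants $C_1,C_2>0$. There is a constant $C$ depending only on $C_\lambda$, $N$, $\varrho$, $C_1$, $C_2$ such that: if $f\in L^1_{\mathrm{loc}}(\mu)$, $A\ge0$ and numbers $(f_B)_B$ satisfy the $\mathrm{RBMO}(\mu)$ conditions with constant $A$, then $|f_{B_1}-f_{B_2}|\le CA$ for all balls $B_1,B_2$ with $$d(c(B_1),c(B_2))\le C_1\max\{r(B_1),r(B_2)\}\le C_2\min\{r(B_1),r(B_2)\}.$$
   Context: Balls $B=B(x,r)=\{y:d(y,x)<r\}$ have specified centre $c(B)=c_B=x$ and radius $r(B)=r_B=r>0$; $tB:=B(x,tr)$. Geometrically doubling: there is $N$ such that every ball $B(x,r)$ is covered by at most $N$ balls of radius $r/2$. Upper doubling: $\mu$ is a Borel measure, finite on bounded sets, and $\lambda:X\times(0,\infty)\to(0,\infty)$ satisfies $r\mapsto\lambda(x,r)$ non-decreasing, $\lambda(x,2r)\le C_\lambda\lambda(x,r)$, $\mu(B(x,r))\le\lambda(x,r)$. The $\mathrm{RBMO}(\mu)$ conditions with constant $A$ (parameter $\varrho$) on $f$ and numbers $f_B$ indexed by balls: $\frac{1}{\mu(\varrho B)}\int_B|f-f_B|\,d\mu\le A$ for all balls $B$, and $|f_B-f_{B_1}|\le A\{1+\int_{2B_1\setminus B}\frac{d\mu(x)}{\lambda(c_B,d(x,c_B))}\}$ whenever $B\subset B_1$. $\|f\|_{\mathrm{RBMO}}$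 is the infimum of admissible $A$. *)

From HB Require Import structures.
From mathcomp Require Import all_boot all_order all_algebra.
From mathcomp Require Import all_classical all_reals all_analysis.
Set Implicit Arguments. Unset Strict Implicit. Unset Printing Implicit Defensive.
Import Order.TTheory GRing.Theory Num.Theory.
Local Open Scope classical_set_scope.
Local Open Scope ring_scope.

Definition is_metric (R : realType) (X : Type) (d : X -> X -> R) : Prop :=
  [/\ forall x y, 0 <= d x y,
      forall x y, d x y = 0 <-> x = y,
      forall x y, d x y = d y x &
      forall x y z, d x z <= d x y + d y z].

Definition mball (R : realType) (X : Type) (d : X -> X -> R) (x : X) (r : R)
  : set X := [set y | d y x < r].

Definition mopen (R : realType) (X : Type) (d : X -> X -> R) (U : set X) : Prop :=
  forall x, U x -> exists2 r, 0 < r & mball d x r `<=` U.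

Definition geom_doubling (R : realType) (X : Type) (d : X -> X -> R) (N : nat)
  : Prop :=
  forall x r, 0 < r -> exists (k : nat) (c : 'I_k -> X),
    (k <= N)%N /\
    mball d x r `<=` \bigcup_(i in [set: 'I_k]) mball d (c i) (r / 2).

Definition upper_doubling (R : realType) (dsp : measure_display)
  (X : measurableType dsp) (d : X -> X -> R)
  (mu : {measure set X -> \bar R}) (lam : X -> R -> R) (Clam : R) : Prop :=
  [/\ forall x r, 0 < r -> 0 < lam x r,
      forall x r s, 0 < r -> r <= s -> lam x r <= lam x s,
      forall x r, 0 < r -> lam x (2 * r) <= Clam * lam x r,
      forall x r, 0 < r -> (mu (mball d x r) <= (lam x r)%:E)%E &
      forall x r, 0 < r -> (mu (mball d x r) < +oo)%E].

Definition loc_integrable (R : realType) (dsp : measure_display)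
  (X : measurableType dsp) (d : X -> X -> R)
  (mu : {measure set X -> \bar R}) (f : X -> R) : Prop :=
  measurable_fun setT f /\
  forall x r, 0 < r -> mu.-integrable (mball d x r) (EFin \o f).

(* The RBMO(mu) conditions with constant A and parameter rho, for f and the
   numbers fB x r = f_{B(x,r)} indexed by balls (centre x, radius r > 0). *)
Definition RBMO_cond (R : realType) (dsp : measure_display)
  (X : measurableType dsp) (d : X -> X -> R)
  (mu : {measure set X -> \bar R}) (lam : X -> R -> R) (rho : R)
  (f : X -> R) (fB : X -> R -> R) (A : R) : Prop :=
  (forall x r, 0 < r ->
     (\int[mu]_(y in mball d x r) (`|f y - fB x r|)%:E
        <= A%:E * mu (mball d x (rho * r)))%E) /\
  (forall x r x1 r1, 0 < r -> 0 < r1 ->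
     mball d x r `<=` mball d x1 r1 ->
     ((`|fB x r - fB x1 r1|)%:E
        <= A%:E * (1 + \int[mu]_(y in mball d x1 (2 * r1) `\` mball d x r)
                          ((lam x (d y x))^-1)%:E))%E).

From HB Require Import structures.
From mathcomp Require Import all_boot all_order all_algebra.
From mathcomp Require Import all_classical all_reals all_analysis.
From mathcomp Require Import lra.
Import Order.TTheory GRing.Theory Num.Theory.
Local Open Scope classical_set_scope.
Local Open Scope ring_scope.

(* Both balls lie in the common ball B = B(c(B_1), R) with
   R = r(B_1) + r(B_2) + d(c(B_1), c(B_2)), and R is comparable to each r(B_i).
   Comparing f_{B_i} with f_B by the second RBMO condition, the integral over
   2B \ B_i is at most mu(2B) / lam(c(B_i), r(B_i)); since 2B sits inside
   B(c(B_i), 2^n r(B_i)) for a fixed n, upper doubling bounds it by Clam^n. *)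

(* The integrand [1 / lam(c, d(y, c))] need not be measurable, so monotonicity
   is derived from the definition of the nonnegative integral as a supremum
   over simple functions. *)
Lemma ge0_le_integral_nomeas (R : realType) (dsp : measure_display)
    (X : measurableType dsp) (mu : {measure set X -> \bar R}) (D : set X)
    (f g : X -> \bar R) :
  (forall x, D x -> (0 <= f x)%E) -> (forall x, D x -> (f x <= g x)%E) ->
  (\int[mu]_(x in D) f x <= \int[mu]_(x in D) g x)%E.
Proof.
move=> f0 fg.
have g0 x : D x -> (0 <= g x)%E by move=> Dx; exact: le_trans (f0 _ Dx) (fg _ Dx).
rewrite !ge0_integralE //; apply: ereal_sup_le => _ [h hf <-]; exists h => //.
move=> x; apply: le_trans (hf x) _; rewrite !patchE.
by case: ifPn => // /set_mem /fg.
Qed.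

Lemma exists_expn2_ge {R : archiRealFieldType} (K : R) : exists n, K <= 2 ^+ n.
Proof.
have [K0|K0] := leP 0 K; last by exists 0%N; rewrite expr0 ltW // (lt_trans K0).
exists (Num.Def.archi_bound K); apply/ltW/(lt_le_trans (archi_boundP K0)).
by rewrite -natrX ler_nat ltnW // ltn_expl.
Qed.

Lemma comparable_radii_le {R : realFieldType} {C1 C2 r1 r2 delta : R} :
  0 < C1 -> delta <= C1 * Num.max r1 r2 ->
  C1 * Num.max r1 r2 <= C2 * Num.min r1 r2 ->
  r1 + r2 + delta <= (2 * (C2 / C1) + C2) * Num.min r1 r2.
Proof.
move=> C10 hd hMm; set M := Num.max r1 r2; set m := Num.min r1 r2.
have hM : M <= C2 / C1 * m.
  by rewrite -(ler_pM2l C10) mulrA mulrCA divff ?gt_eqF ?mulr1.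
have r1M : r1 <= M by rewrite le_max lexx.
have r2M : r2 <= M by rewrite le_max lexx orbT.
have := le_trans hd hMm; rewrite -/m mulrDl -mulrA; lra.
Qed.

Section RBMOComparison.
Context {R : realType} {dsp : measure_display} {X : measurableType dsp}.
Context {d : X -> X -> R} {mu : {measure set X -> \bar R}}.
Context {lam : X -> R -> R} {Clam : R}.
Hypothesis metric_d : is_metric d.
Hypothesis borel_X : @measurable dsp X = <<s [set U | mopen d U] >>.
Hypothesis updbl : upper_doubling d mu lam Clam.

Lemma mopen_mball x r : mopen d (mball d x r).
Proof.
have [_ _ _ dtri] := metric_d.
move=> y yB; exists (r - d y x); first by rewrite subr_gt0.
move=> z zB; have := dtri z y x; rewrite /mball /= in yB zB *; lra.
Qed.

Lemma measurable_mball x r : measurable (mball d x r).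
Proof. by rewrite borel_X; apply: sub_sigma_algebra; exact: mopen_mball. Qed.

Lemma lam_expn2_le n x r : 0 < r -> lam x (2 ^+ n * r) <= Clam ^+ n * lam x r.
Proof.
have [lam_gt0 _ lam_dbl _ _] := updbl; move=> r0.
have Clam0 : 0 <= Clam.
  have : 0 < Clam * lam x r by apply: lt_le_trans (lam_dbl _ _ r0); apply: lam_gt0; lra.
  by rewrite pmulr_lgt0 ?lam_gt0 // => /ltW.
elim: n => [|n IHn]; first by rewrite !expr0 !mul1r.
have p : 0 < 2 ^+ n * r by rewrite mulr_gt0 // exprn_gt0.
rewrite exprS -mulrA; apply: le_trans (lam_dbl _ _ p) _.
by rewrite exprS -mulrA ler_wpM2l.
Qed.

Lemma integral_inv_lam_le (D : set X) x r S :
  0 < r -> 0 < S -> measurable D -> D `<=` mball d x S ->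
  (forall y, D y -> r <= d y x) ->
  (\int[mu]_(y in D) ((lam x (d y x))^-1)%:E <= ((lam x r)^-1 * lam x S)%:E)%E.
Proof.
have [lam_gt0 lam_mono _ mu_le _] := updbl.
move=> r0 S0 mD DS Dr; have lr0 : 0 < lam x r by exact: lam_gt0.
apply: (@le_trans _ _ (\int[mu]_(y in D) (cst ((lam x r)^-1)%:E y))%E).
  apply: ge0_le_integral_nomeas => y /Dr ry.
    by rewrite lee_fin invr_ge0 ltW // lam_gt0 //; lra.
  by rewrite lee_fin lef_pV2 ?posrE ?lam_mono ?lam_gt0 //; lra.
rewrite integral_cst // EFinM; apply: lee_wpmul2l; first by rewrite lee_fin invr_ge0 ltW.
apply: le_trans (mu_le x S S0); apply: le_measure; rewrite ?inE //; exact: measurable_mball.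
Qed.

Context {rho : R} {f : X -> R} {fB : X -> R -> R} {A : R}.
Hypothesis RBMO_fB : RBMO_cond d mu lam rho f fB A.
Hypothesis A_ge0 : 0 <= A.

Lemma RBMO_nested_le x r x' r' S n :
  0 < r -> 0 < r' -> mball d x r `<=` mball d x' r' -> 0 < S ->
  mball d x' (2 * r') `<=` mball d x S -> S <= 2 ^+ n * r ->
  `|fB x r - fB x' r'| <= A * (1 + Clam ^+ n).
Proof.
have [lam_gt0 lam_mono _ _ _] := updbl.
move=> r0 r'0 BB' S0 B'S Sn; have := RBMO_fB.2 x r x' r' r0 r'0 BB'.
set I := (\int[mu]_(y in _) _)%E => fB_le.
have far_y y : (mball d x' (2 * r') `\` mball d x r) y -> r <= d y x.
  by move=> [_ /negP]; rewrite /mball /= -leNgt.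
have I_le : (I <= (Clam ^+ n)%:E)%E.
  have mD : measurable (mball d x' (2 * r') `\` mball d x r).
    by apply: measurableD; exact: measurable_mball.
  have DS : mball d x' (2 * r') `\` mball d x r `<=` mball d x S by move=> y [/B'S].
  apply: le_trans (integral_inv_lam_le _ _ _ _ r0 S0 mD DS far_y) _.
  rewrite lee_fin ler_pdivrMl ?lam_gt0 // mulrC.
  by apply: le_trans (lam_expn2_le n x _ r0); apply: lam_mono.
rewrite -lee_fin EFinM; apply: le_trans fB_le _.
by rewrite lee_wpmul2l ?lee_fin // EFinD leeD2l.
Qed.

Lemma RBMO_enclosing_le x r y Rad n :
  0 < r -> r + d x y <= Rad -> 3 * Rad <= 2 ^+ n * r ->
  `|fB x r - fB y Rad| <= A * (1 + Clam ^+ n).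
Proof.
have [d_ge0 _ d_sym d_tri] := metric_d.
move=> r0 hRad hn; have dxy := d_ge0 x y.
apply: (RBMO_nested_le _ _ _ _ (3 * Rad)); rewrite /mball //=; try lra.
- by move=> z /= zx; have := d_tri z x y; lra.
- by move=> z /= zy; have := d_tri z y x; rewrite (d_sym y x); lra.
Qed.

End RBMOComparison.

Theorem lemma5p2 (R : realType) (Clam : R) (N : nat) (rho C1 C2 : R) :
  1 < rho -> 0 < C1 -> 0 < C2 ->
  exists C : R,
  forall (dsp : measure_display) (X : measurableType dsp) (d : X -> X -> R)
    (mu : {measure set X -> \bar R}) (lam : X -> R -> R),
    is_metric d ->
    @measurable dsp X = <<s [set U | mopen d U] >> ->
    geom_doubling d N ->
    upper_doubling d mu lam Clam ->
  forall (f : X -> R) (A : R) (fB : X -> R -> R),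
    loc_integrable d mu f -> 0 <= A ->
    RBMO_cond d mu lam rho f fB A ->
  forall (x1 x2 : X) (r1 r2 : R), 0 < r1 -> 0 < r2 ->
    d x1 x2 <= C1 * Num.max r1 r2 ->
    C1 * Num.max r1 r2 <= C2 * Num.min r1 r2 ->
    `|fB x1 r1 - fB x2 r2| <= C * A.
Proof.
move=> _ C10 C20; set K := 3 * (2 * (C2 / C1) + C2).
have [n Kn] := exists_expn2_ge K; exists (2 * (1 + Clam ^+ n)).
move=> dsp X d mu lam md hm _ ud f A fB _ A0 rb x1 x2 r1 r2 r10 r20 hd hMm.
have [d_ge0 d_eq0 d_sym _] := md.
set Rad := r1 + r2 + d x1 x2.
have Rad_le := comparable_radii_le C10 hd hMm.
have enclosing_le r : 0 < r -> Num.min r1 r2 <= r -> 3 * Rad <= 2 ^+ n * r.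
  move=> r0 mr; apply: le_trans (_ : K * r <= _); last by rewrite ler_pM2r.
  rewrite /K -mulrA ler_pM2l //; apply: le_trans Rad_le _.
  have ratio_ge0 : 0 <= C2 / C1 by rewrite divr_ge0 ?ltW.
  by apply: ler_wpM2l mr; lra.
have h1 : `|fB x1 r1 - fB x1 Rad| <= A * (1 + Clam ^+ n).
  apply: (RBMO_enclosing_le md hm ud rb A0) => //; last by rewrite enclosing_le ?ge_min ?lexx.
  by rewrite (proj2 (d_eq0 x1 x1)) // /Rad; have := d_ge0 x1 x2; lra.
have h2 : `|fB x2 r2 - fB x1 Rad| <= A * (1 + Clam ^+ n).
  apply: (RBMO_enclosing_le md hm ud rb A0) => //; last by rewrite enclosing_le ?ge_min ?lexx ?orbT.
  by rewrite d_sym /Rad; lra.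
have := ler_normD (fB x1 r1 - fB x1 Rad) (fB x1 Rad - fB x2 r2).
rewrite addrA subrK (distrC (fB x1 Rad)); lra.
Qed.
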